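(* Let $\mathbb{M}\subset\mathbb{T}^d$ be Lebesgue measurable and let $\mathbf{a}\in\mathbb{R}^d$ satisfy $\Lambda_{\mathbb{M}}(\mathbf{a})>0$. Then there exist $c>0$ and $\epsilon>0$ such that $\Lambda_{\mathbb{M}}(\lambda\mathbf{a})\ge c\lambda$ for all $0<\lambda<\epsilon$.
   Context: $\mathbb{T}^d=(\mathbb{R}/2\pi\mathbb{Z})^d$ with Lebesgue measure $|\cdot|$. For $\mathbf{a}\in\mathbb{R}^d$, $\mathbb{M}+\mathbf{a}$ is the translate of $\mathbb{M}$ (mod $2\pi$ in each coordinate), and $\Lambda_{\mathbb{M}}(\mathbf{a})=|\mathbb{M}\setminus(\mathbb{M}+\mathbf{a})|$. *)

From HB Require Import structures.
From mathcomp Require Import all_boot all_order all_algebra.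
From mathcomp Require Import all_classical all_reals all_analysis.

Set Implicit Arguments.
Unset Strict Implicit.
Unset Printing Implicit Defensive.
Import Order.TTheory GRing.Theory Num.Theory.
Import numFieldNormedType.Exports.

Local Open Scope classical_set_scope.
Local Open Scope ring_scope.

(* Points of R^d are d-tuples of reals; [d.-tuple R] carries MathComp-Analysis'
   product (= Borel) sigma-algebra generated by the coordinate projections. *)

Definition tsub (R : realType) (d : nat) (x y : d.-tuple R) : d.-tuple R :=
  [tuple tnth x i - tnth y i | i < d].

Definition tscale (R : realType) (d : nat) (l : R) (x : d.-tuple R) : d.-tuple R :=
  [tuple l * tnth x i | i < d].

(* mu is the d-dimensional Lebesgue measure on the Borel sets of R^d:
   it gives every half-open box its volume (this determines mu uniquely). *)
Definition is_lebesgue (R : realType) (d : nat)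
    (mu : {measure set (d.-tuple R) -> \bar R}) : Prop :=
  forall a b : d.-tuple R, (forall i, tnth a i <= tnth b i) ->
    mu [set x | forall i, tnth a i <= tnth x i < tnth b i] =
    (\prod_(i < d) (tnth b i - tnth a i))%:E.

(* A subset of the torus T^d = (R/2piZ)^d is represented by its
   (2pi Z^d)-periodic lift to R^d. *)
Definition torus_set (R : realType) (d : nat) (M : set (d.-tuple R)) : Prop :=
  forall x y : d.-tuple R,
    (forall i, exists k : int, tnth x i - tnth y i = 2 * pi * k%:~R) ->
    (M x <-> M y).

Definition leb_measurable (R : realType) (d : nat)
    (mu : {measure set (d.-tuple R) -> \bar R}) (M : set (d.-tuple R)) : Prop :=
  ((mu^*)%mu).-caratheodory M.

Definition translate (R : realType) (d : nat) (M : set (d.-tuple R))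
    (a : d.-tuple R) : set (d.-tuple R) :=
  [set x | M (tsub x a)].

Definition fund_dom (R : realType) (d : nat) : set (d.-tuple R) :=
  [set x | forall i, 0 <= tnth x i < 2 * pi].

(* Lambda_M(a) = |M \ (M + a)|, the Lebesgue measure on T^d *)
Definition Lambda (R : realType) (d : nat)
    (mu : {measure set (d.-tuple R) -> \bar R}) (M : set (d.-tuple R))
    (a : d.-tuple R) : \bar R :=
  (mu^*)%mu (@fund_dom R d `&` (M `\` translate M a)).

(* Lambda_M is subadditive, because Lebesgue measure is translation invariant and,
   for a periodic set, so is the measure of its trace on the fundamental domain
   (cut the domain along hyperplanes and move the pieces by periods).  It tends to 0
   at 0, because translation is continuous in measure: this holds for finite Boolean
   combinations of half-spaces, these approximate every Borel set inside a cube, and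
   Lebesgue measurable sets are Borel sets up to a small outer measure.  Finally, a
   nonnegative subadditive function on R that tends to 0 at 0 and is positive at 1
   grows at least linearly near 0. *)

From HB Require Import structures.
From mathcomp Require Import all_boot all_order all_algebra.
From mathcomp Require Import all_classical all_reals all_analysis.
From mathcomp Require Import measurable_realfun ring lra.
Import Order.TTheory GRing.Theory Num.Theory.
Import numFieldNormedType.Exports.
Local Open Scope classical_set_scope.
Local Open Scope ring_scope.
Set Implicit Arguments.
Unset Strict Implicit.
Unset Printing Implicit Defensive.

Lemma setYCC (T : Type) (A B : set T) : ~` A `+` ~` B = A `+` B.
Proof.
rewrite /setY; apply/seteqP; split => x /=;
  by have [|] := pselect (A x); have [|] := pselect (B x); tauto.
Qed.

Lemma setYUU_sub (T : Type) (A B C D : set T) :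
  (A `|` B) `+` (C `|` D) `<=` (A `+` C) `|` (B `+` D).
Proof.
rewrite /setY => x /=; have [|] := pselect (A x); have [|] := pselect (B x);
  have [|] := pselect (C x); have [|] := pselect (D x); tauto.
Qed.

Lemma measurableY d (T : measurableType d) (A B : set T) :
  measurable A -> measurable B -> measurable (A `+` B).
Proof. by move=> mA mB; apply: measurableU; apply: measurableD. Qed.

Lemma le_measure_cover2 d (T : measurableType d) (R : realType)
    (mu : {measure set T -> \bar R}) (X Y Z : set T) (e1 e2 : R) :
  measurable X -> measurable Y -> measurable Z -> X `<=` Y `|` Z ->
  (mu Y <= e1%:E)%E -> (mu Z <= e2%:E)%E -> (mu X <= (e1 + e2)%:E)%E.
Proof.
move=> mX mY mZ XYZ muY muZ.
apply: le_trans (le_measure _ _ _ XYZ) _; rewrite ?inE //; first exact: measurableU.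
by apply: le_trans (measureU2 _ mY mZ) _; rewrite EFinD leeD.
Qed.

Section Translation.
Variables (R : realType) (d : nat).
Local Notation T := (d.-tuple R).

Definition tadd (x y : T) : T := [tuple tnth x i + tnth y i | i < d].
Definition tneg (x : T) : T := [tuple - tnth x i | i < d].
Definition tconst (c : R) : T := [tuple c | i < d].

Definition box (a b : T) : set T := [set x | forall i, tnth a i <= tnth x i < tnth b i].
Definition cube (r : R) : set T := box (tconst (- r)) (tconst r).
Definition halfspace (i : 'I_d) (c : R) : set T := [set x | tnth x i < c].

Lemma tnth_tsub (x y : T) i : tnth (tsub x y) i = tnth x i - tnth y i.
Proof. by rewrite tnth_mktuple. Qed.

Lemma exists_cube_bound (x : T) : exists k : nat, forall j, `|tnth x j| < k%:R.
Proof.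
exists (Num.truncn (\sum_(j < d) `|tnth x j|)).+1 => j.
apply: le_lt_trans (truncnS_gt _).
by rewrite (bigD1 j) //= lerDl sumr_ge0.
Qed.

Lemma bigcup_cube : \bigcup_k cube k%:R = [set: T].
Proof.
apply/seteqP; split => x // _; have [k hk] := exists_cube_bound x.
exists k => // j; move: (hk j); rewrite ltr_norml !tnth_mktuple => /andP[h1 h2].
by rewrite (ltW h1) h2.
Qed.

Lemma halfspace_bigcup i c : halfspace i c =
  \bigcup_k box (tconst (- k%:R)) [tuple if j == i then c else k%:R | j < d].
Proof.
apply/seteqP; split => x /=; last first.
  by move=> [k _ /(_ i)]; rewrite !tnth_mktuple eqxx => /andP[].
move=> xi; have [k hk] := exists_cube_bound x; exists k => // j.
move: (hk j); rewrite ltr_norml !tnth_mktuple => /andP[h1 h2].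
by rewrite (ltW h1); case: eqP => [->|].
Qed.

Lemma measurable_halfspace i c : measurable (halfspace i c).
Proof.
have := @measurable_tnth _ R d i measurableT `]-oo, c[%classic (measurable_itv _).
by rewrite setTI; congr measurable; apply/seteqP; split => x /=; rewrite in_itv.
Qed.

Lemma measurable_box a b : measurable (box a b).
Proof.
have -> : box a b = \bigcap_(i in [set: 'I_d])
    ((@tnth d R ^~ i) @^-1` `[tnth a i, tnth b i[%classic).
  by apply/seteqP; split => x /= H i => [_|]; rewrite ?in_itv; [exact: H|exact: H].
apply: fin_bigcap_measurable => // i _.
have := @measurable_tnth _ R d i measurableT _ (measurable_itv `[tnth a i, tnth b i[).
by rewrite setTI.
Qed.

Definition boxes : set (set T) := [set B | exists a b, B = box a b].

Lemma measurable_boxesE : (measurable : set (set T)) = <<s boxes >>.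
Proof.
apply/seteqP; split; last first.
  apply: smallest_sub; first exact: sigma_algebra_measurable.
  by move=> _ [a [b ->]]; exact: measurable_box.
apply: smallest_sub; first exact: smallest_sigma_algebra.
move=> B; rewrite -bigcup_seq => -[i _ [A mA <-]].
have : (@RGenInftyO.G R).-sigma.-measurable A by rewrite -RGenInftyO.measurableE.
move: A {mA}; apply: smallest_sub.
  split.
  - by rewrite preimage_set0 setI0; exact: sigma_algebra0.
  - move=> A; rewrite !setTI setTD preimage_setC; exact: sigma_algebraC.
  - move=> F hF; rewrite preimage_bigcup setI_bigcupr.
    exact: sigma_algebra_bigcup.
move=> _ [c ->]; rewrite setTI.
have -> : (fun x : T => tnth x i) @^-1` `]-oo, c[%classic = halfspace i c.
  by apply/seteqP; split => x /=; rewrite in_itv.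
rewrite halfspace_bigcup; apply: sigma_algebra_bigcup => k.
by apply: sub_sigma_algebra; do 2 eexists.
Qed.

Lemma measurable_fun_tsub (b : T) : measurable_fun setT ((fun x => tsub x b)).
Proof.
apply/measurable_fun_tnthP => i.
have -> : @tnth d R ^~ i \o (fun x => tsub x b) = (fun x : T => tnth x i - tnth b i).
  by apply/funext => x /=; rewrite tnth_tsub.
by apply: measurable_funB; [exact: measurable_tnth | exact: measurable_cst].
Qed.

Lemma measurable_translate (A : set T) b : measurable A -> measurable (translate A b).
Proof. by move=> mA; have := measurable_fun_tsub b measurableT mA; rewrite setTI. Qed.

Lemma translate_box a b c : translate (box a b) c = box (tadd a c) (tadd b c).
Proof.
by apply/seteqP; split => x /= H i; move: (H i); rewrite !tnth_mktuple => /andP[? ?];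
  apply/andP; split; lra.
Qed.

Lemma box_set0 a b i : tnth b i < tnth a i -> box a b = set0.
Proof. by move=> ba; apply/seteqP; split => x //= /(_ i) /andP[? ?]; lra. Qed.

Lemma translateD (X : set T) b c :
  translate (translate X b) c = translate X (tadd b c).
Proof.
by apply/seteqP; split => x /=; congr X; apply: eq_from_tnth => i;
  rewrite !tnth_mktuple; ring.
Qed.

Lemma translateK (X : set T) c : translate (translate X c) (tneg c) = X.
Proof.
rewrite translateD; apply/seteqP; split => x /=; congr X;
  by apply: eq_from_tnth => i; rewrite !tnth_mktuple; ring.
Qed.

Variable mu : {measure set T -> \bar R}.
Hypothesis mu_leb : is_lebesgue mu.

Lemma measure_box_lty a b : (mu (box a b) < +oo)%E.
Proof.
have [ab|/existsNP[i /negP]] := pselect (forall i, tnth a i <= tnth b i).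
  by rewrite mu_leb //; exact: ltry.
by rewrite -ltNge => /box_set0 ->; rewrite measure0.
Qed.

Lemma measure_translate_box a b c : mu (translate (box a b) c) = mu (box a b).
Proof.
rewrite translate_box.
have [ab|/existsNP[i /negP]] := pselect (forall i, tnth a i <= tnth b i).
  rewrite !mu_leb //; last by move=> i; rewrite !tnth_mktuple lerD2r.
  by congr EFin; apply: eq_bigr => i _; rewrite !tnth_mktuple; ring.
rewrite -ltNge => ba; rewrite (box_set0 ba) (@box_set0 _ _ i) ?measure0 //.
by rewrite !tnth_mktuple ltrD2r.
Qed.

(* Both [mu] and its image under [x |-> x - c] are determined by their values on
   boxes, a pi-system generating the Borel sets and covered by the finite cubes. *)
Lemma measure_translate (A : set T) c : measurable A -> mu (translate A c) = mu A.
Proof.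
move=> mA.
have := @measure_unique _ R T boxes (fun k => cube k%:R) measurable_boxesE _ _
  bigcup_cube mu (pushforward mu (fun x => tsub x c)).
move=> /(_ _ _ (measurable_fun_tsub c) _ _ A mA) muE; rewrite muE //.
- move=> _ _ [a [b ->]] [a' [b' ->]].
  exists [tuple Num.max (tnth a i) (tnth a' i) | i < d].
  exists [tuple Num.min (tnth b i) (tnth b' i) | i < d].
  apply/seteqP; split => x /=.
    move=> [H1 H2] i; rewrite !tnth_mktuple ge_max lt_min.
    by case/andP: (H1 i) => -> ->; case/andP: (H2 i) => -> ->.
  by move=> H; split => i; move: (H i); rewrite !tnth_mktuple ge_max lt_min;
    case/andP => /andP[? ?] /andP[? ?]; apply/andP.
- by move=> k; do 2 eexists.
- by move=> _ [a [b ->]]; exact/esym/measure_translate_box.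
- by move=> k; exact: measure_box_lty.
Qed.

Local Open Scope measure_scope.

Lemma le_outer_measure_translate (X : set T) c : (mu^* (translate X c) <= mu^* X)%E.
Proof.
apply: le_ereal_inf_tmp => _ [F [mF XF] <-]; apply: ereal_inf_lbound.
exists (fun k => translate (F k) c).
  split; first by move=> k; exact: measurable_translate.
  by move=> x /XF [k _ Fk]; exists k.
by apply: eq_eseriesr => k _; exact: measure_translate.
Qed.

Lemma outer_measure_translate (X : set T) c : mu^* (translate X c) = mu^* X.
Proof.
apply/le_anti; rewrite le_outer_measure_translate /=.
by rewrite -{1}(translateK X c) le_outer_measure_translate.
Qed.

End Translation.

Section Periodic.
Variables (R : realType) (d : nat).
Local Notation T := (d.-tuple R).
Variable mu : {measure set T -> \bar R}.
Hypothesis mu_leb : is_lebesgue mu.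
Variable P : set T.
Hypothesis P_periodic : torus_set P.
Local Open Scope measure_scope.

Definition taxis (j : 'I_d) (s : R) : T := [tuple if i == j then s else 0 | i < d].

Definition fund_dom_shift (c : T) : set T :=
  [set x | forall i, 0 <= tnth x i + tnth c i < 2 * pi].

Lemma outer_measure_halfspace_split j c (X : set T) :
  mu^* X = (mu^* (X `&` halfspace j c) + mu^* (X `&` ~` halfspace j c))%E.
Proof. exact: (caratheodory_measurable_mu_ext mu (measurable_halfspace j c)). Qed.

Lemma periodic_taxis j (k : int) x y : P x ->
  (forall i, tnth x i - tnth y i = if i == j then 2 * pi * k%:~R else 0) -> P y.
Proof.
move=> Px xy; apply/(P_periodic _).1: Px => i; rewrite xy.
by case: eqP => _; [exists k | exists 0; rewrite mulr0z mulr0].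
Qed.

Lemma fund_dom_shift_period c j (k : int) :
  fund_dom_shift (tadd c (taxis j (2 * pi * k%:~R))) `&` P =
  translate (fund_dom_shift c `&` P) (taxis j (- (2 * pi * k%:~R))).
Proof.
apply/seteqP; split => x /= [Dx Px]; split.
- by move=> i; move: (Dx i); rewrite !tnth_mktuple; case: eqP => _; lra.
- apply: (@periodic_taxis j (- k) _ _ Px) => i; rewrite !tnth_mktuple.
  by case: eqP => _; rewrite ?mulrNz; ring.
- by move=> i; move: (Dx i); rewrite !tnth_mktuple; case: eqP => _; lra.
- apply: (@periodic_taxis j k _ _ Px) => i; rewrite !tnth_mktuple.
  by case: eqP => _; ring.
Qed.

(* Cut both sets along a hyperplane orthogonal to e_j: one pair of pieces
   coincides, the other pair differs by the period 2 pi e_j. *)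
Lemma outer_measure_fund_dom_shift_small c j s : 0 <= s < 2 * pi ->
  mu^* (fund_dom_shift (tadd c (taxis j s)) `&` P) = mu^* (fund_dom_shift c `&` P).
Proof.
move=> /andP[s0 s2pi].
set L := fund_dom_shift _ `&` P; set Q := fund_dom_shift c `&` P.
rewrite (outer_measure_halfspace_split j (- tnth c j) L).
rewrite (outer_measure_halfspace_split j (2 * pi - s - tnth c j) Q).
have -> : L `&` ~` halfspace j (- tnth c j) = Q `&` halfspace j (2 * pi - s - tnth c j).
  rewrite /halfspace; apply/seteqP; split => x /= [[Dx Px] Hx].
    move/negP: Hx; rewrite -leNgt => Hx.
    split; [split => // i|].
      by move: (Dx i); rewrite !tnth_mktuple; case: eqP => [->|_]; rewrite ?eqxx; lra.
    by move: (Dx j); rewrite !tnth_mktuple eqxx; lra.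
  split; [split => // i|].
    by move: (Dx i); rewrite !tnth_mktuple; case: eqP => [->|_]; rewrite ?eqxx; lra.
  by apply/negP; rewrite -leNgt; move: (Dx j); lra.
have -> : Q `&` ~` halfspace j (2 * pi - s - tnth c j) =
          translate (L `&` halfspace j (- tnth c j)) (taxis j (2 * pi)).
  rewrite /halfspace; apply/seteqP; split => y /= [[Dy Py] Hy].
    move/negP: Hy; rewrite -leNgt => Hy.
    split; [split|].
    - by move=> i; move: (Dy i); rewrite !tnth_mktuple; case: eqP => [->|_];
        rewrite ?eqxx; lra.
    - apply: (@periodic_taxis j 1 _ _ Py) => i; rewrite !tnth_mktuple.
      by case: eqP => _; rewrite ?mulrNz; ring.
    - by move: (Dy j); rewrite /= !tnth_mktuple eqxx; lra.
  move: (Dy j) Hy; rewrite /= !tnth_mktuple eqxx => Dyj Hy.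
  split; [split|].
  - by move=> i; move: (Dy i); rewrite !tnth_mktuple; case: eqP => [->|_];
      rewrite ?eqxx; lra.
  - apply: (@periodic_taxis j (-1) _ _ Py) => i; rewrite !tnth_mktuple.
    by case: eqP => _; rewrite ?mulrNz; ring.
  - by apply/negP; rewrite -leNgt; lra.
by rewrite outer_measure_translate // addeC.
Qed.

Lemma outer_measure_fund_dom_shift_axis c j s :
  mu^* (fund_dom_shift (tadd c (taxis j s)) `&` P) = mu^* (fund_dom_shift c `&` P).
Proof.
have pi0 := pi_gt0 R.
set k := Num.floor (s / (2 * pi)).
have /andP[k1 k2] := Num.Theory.floor_itv (s / (2 * pi)).
rewrite ler_pdivlMr ?mulr_gt0 // in k1.
rewrite intrD1 ltr_pdivrMr ?mulr_gt0 // in k2.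
have -> : tadd c (taxis j s) =
    tadd (tadd c (taxis j (2 * pi * k%:~R))) (taxis j (s - 2 * pi * k%:~R)).
  by apply: eq_from_tnth => i; rewrite !tnth_mktuple; case: eqP => _; ring.
rewrite outer_measure_fund_dom_shift_small; last by apply/andP; split; lra.
by rewrite fund_dom_shift_period // outer_measure_translate.
Qed.

Lemma outer_measure_fund_dom_shift c :
  mu^* (fund_dom_shift c `&` P) = mu^* (@fund_dom R d `&` P).
Proof.
pose cp (n : nat) : T := [tuple if (i < n)%N then tnth c i else 0 | i < d].
have cpS n (nd : (n < d)%N) : cp n.+1 = tadd (cp n) (taxis (Ordinal nd) (tnth c (Ordinal nd))).
  apply: eq_from_tnth => i; rewrite !tnth_mktuple ltnS leq_eqVlt.
  have -> : (i == Ordinal nd) = (nat_of_ord i == n) by [].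
  by case: (ltngtP i n) => h /=; rewrite ?addr0 // add0r; congr tnth; apply: val_inj.
have cp_ge n : (d <= n)%N -> cp n = c.
  by move=> dn; apply: eq_from_tnth => i; rewrite tnth_mktuple (leq_trans (ltn_ord i) dn).
have cpE n : mu^* (fund_dom_shift (cp n) `&` P) = mu^* (fund_dom_shift (cp 0) `&` P).
  elim: n => // n IH; rewrite -IH.
  have [nd|dn] := ltnP n d; first by rewrite cpS outer_measure_fund_dom_shift_axis.
  by rewrite !cp_ge // (leq_trans dn).
rewrite -(cp_ge d) // cpE; congr (mu^* (_ `&` P)).
by apply/seteqP; split => x /= Dx i; move: (Dx i); rewrite !tnth_mktuple addr0.
Qed.

Lemma outer_measure_fund_dom_translate c :
  mu^* (@fund_dom R d `&` translate P c) = mu^* (@fund_dom R d `&` P).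
Proof.
rewrite -(outer_measure_fund_dom_shift c).
rewrite -(outer_measure_translate mu_leb (fund_dom_shift c `&` P) c).
congr (mu^* _); apply/seteqP; split => x /= [Dx Px]; split => // i;
  by move: (Dx i); rewrite /= !tnth_mktuple subrK.
Qed.

End Periodic.
Section Approximation.
Variables (R : realType) (d : nat).
Local Notation T := (d.-tuple R).
Variable mu : {measure set T -> \bar R}.
Hypothesis mu_leb : is_lebesgue mu.

Inductive elementary : set T -> Prop :=
| elementary0 : elementary set0
| elementary_halfspace i c : elementary (halfspace i c)
| elementaryC U : elementary U -> elementary (~` U)
| elementaryU U V : elementary U -> elementary V -> elementary (U `|` V).

Lemma measurable_elementary U : elementary U -> measurable U.
Proof.
elim => [|i c|{}U _ mU|{}U V _ mU _ mV]; first exact: measurable0.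
- exact: measurable_halfspace.
- exact: measurableC.
- exact: measurableU.
Qed.

Lemma elementaryT : elementary [set: T].
Proof. by rewrite -setC0; do 2 constructor. Qed.

Lemma elementaryI U V : elementary U -> elementary V -> elementary (U `&` V).
Proof. by move=> eU eV; rewrite -(setCK U) -(setCK V) -setCU; do 3 constructor. Qed.

Lemma elementary_box a b : elementary (box a b).
Proof.
have -> : box a b = \big[setI/setT]_(i <- index_enum 'I_d)
    (halfspace i (tnth b i) `&` ~` halfspace i (tnth a i)).
  rewrite -bigcap_seq /box /halfspace; apply/seteqP; split => x /=.
    by move=> H i _; case/andP: (H i) => ab xb; split => //; apply/negP; rewrite -leNgt.
  move=> H i; have [-> /negP] := H i (mem_index_enum i).
  by rewrite -leNgt => ->.
elim/big_ind: _ => [|U V|i _]; first exact: elementaryT.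
  exact: elementaryI.
by apply: elementaryI; do 2 constructor.
Qed.

Variable r : R.
Hypothesis r_gt0 : 0 < r.

Lemma measurable_cube_setY (B U : set T) :
  measurable B -> measurable U -> measurable (cube r `&` (B `+` U)).
Proof. by move=> mB mU; apply: measurableI; [exact: measurable_box|exact: measurableY]. Qed.

Definition translation_continuous (U : set T) :=
  forall e : R, 0 < e -> exists2 del : R, 0 < del & forall b : T,
    (forall i, `|tnth b i| < del) -> (mu (cube r `&` (U `+` translate U b)) <= e%:E)%E.

(* [H + b] and [H] only differ in a slab of width [|b_i|] around the hyperplane. *)
Lemma translation_continuous_halfspace i c : translation_continuous (halfspace i c).
Proof.
move=> e e_gt0.
pose vol := \prod_(j < d | j != i) (r - - r).
have vol_gt0 : 0 < vol by apply: prodr_gt0 => j _; rewrite opprK addr_gt0.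
pose del := e / (2 * vol).
have del_gt0 : 0 < del by apply: divr_gt0; lra.
exists del => // b small_b.
pose lo : T := [tuple if j == i then c - del else - r | j < d].
pose hi : T := [tuple if j == i then c + del else r | j < d].
apply: (@le_trans _ _ (mu (box lo hi))).
  apply: le_measure; rewrite ?inE.
  - by apply: measurable_cube_setY; [|apply: measurable_translate];
      exact: measurable_halfspace.
  - exact: measurable_box.
  move=> x [Kx Sx] j; move: (Kx j); rewrite !tnth_mktuple.
  case: eqP => [->|_]; last lra.
  have := small_b i; have := ler_norm (tnth b i); have := ler_norm (- tnth b i).
  rewrite normrN; move: Sx; rewrite /setY /halfspace /translate /= tnth_tsub.
  by case=> [[? /negP]|[? /negP]]; rewrite -leNgt; lra.
rewrite mu_leb ?lee_fin; last first.
  by move=> j; rewrite !tnth_mktuple; case: eqP => _; move: del_gt0 r_gt0; lra.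
rewrite (bigD1 i) //= !tnth_mktuple eqxx.
rewrite (eq_bigr (fun => r - - r)); last by move=> j /negPf ji; rewrite !tnth_mktuple ji.
have -> : c + del - (c - del) = e / vol by rewrite /del; field; lra.
by rewrite divfK //; lra.
Qed.

Lemma translation_continuous_elementary U : elementary U -> translation_continuous U.
Proof.
elim => [|i c|{}U _ cU|{}U V eU cU eV cV] e e_gt0.
- by exists 1 => // b _; rewrite /setY !set0D setU0 setI0 measure0 lee_fin ltW.
- exact: translation_continuous_halfspace.
- have [del del_gt0 H] := cU e e_gt0.
  by exists del => // b /H; rewrite -setYCC.
- have e2_gt0 : 0 < e / 2 by lra.
  have [d1 d1_gt0 H1] := cU _ e2_gt0; have [d2 d2_gt0 H2] := cV _ e2_gt0.
  exists (Num.min d1 d2) => [|b small_b]; first by rewrite lt_min d1_gt0 d2_gt0.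
  have mS W : elementary W -> measurable (cube r `&` (W `+` translate W b)).
    move=> eW; apply: measurable_cube_setY; first exact: measurable_elementary.
    by apply: measurable_translate; exact: measurable_elementary.
  rewrite (splitr e); apply: (le_measure_cover2 _ (mS _ eU) (mS _ eV)).
  - by apply: mS; constructor.
  - by rewrite -setIUr; apply: setIS; exact: setYUU_sub.
  - by apply: H1 => i; move: (small_b i); rewrite lt_min => /andP[].
  - by apply: H2 => i; move: (small_b i); rewrite lt_min => /andP[].
Qed.

Definition elementary_approx (B : set T) := forall e : R, 0 < e ->
  exists2 U, elementary U & (mu (cube r `&` (B `+` U)) <= e%:E)%E.

Definition approximable : set (set T) := [set B | measurable B /\ elementary_approx B].

Lemma approximable_self U : elementary U -> approximable U.
Proof.
move=> eU; split; first exact: measurable_elementary.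
by move=> e e_gt0; exists U; rewrite // setYK setI0 measure0 lee_fin ltW.
Qed.

Lemma approximableU A B : approximable A -> approximable B -> approximable (A `|` B).
Proof.
move=> [mA aA] [mB aB]; split => [|e e_gt0]; first exact: measurableU.
have e2_gt0 : 0 < e / 2 by lra.
have [U eU hU] := aA _ e2_gt0; have [V eV hV] := aB _ e2_gt0.
have [mU mV] := (measurable_elementary eU, measurable_elementary eV).
exists (U `|` V); first by constructor.
rewrite (splitr e); apply: (le_measure_cover2 _ (measurable_cube_setY mA mU)
  (measurable_cube_setY mB mV) _ hU hV).
- by apply: measurable_cube_setY; apply: measurableU.
- by rewrite -setIUr; apply: setIS; exact: setYUU_sub.
Qed.

Lemma approximable_bigsetU (F : (set T)^nat) n :
  (forall k, approximable (F k)) -> approximable (\big[setU/set0]_(k < n) F k).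
Proof.
move=> aF; elim: n => [|n IH]; last by rewrite big_ord_recr; exact: approximableU.
by rewrite big_ord0; apply: approximable_self; constructor.
Qed.

Lemma measure_cube_bigcup_tail (F : (set T)^nat) : (forall k, measurable (F k)) ->
  forall e : R, 0 < e -> exists N,
    (mu (cube r `&` (\bigcup_k F k `\` \big[setU/set0]_(k < N) F k)) <= e%:E)%E.
Proof.
move=> mF e e_gt0.
pose Bn n := \big[setU/set0]_(k < n) F k.
have BnE n : Bn n = \bigcup_(k in `I_n) F k by rewrite /Bn -bigcup_mkord.
pose G n := cube r `&` (\bigcup_k F k `\` Bn n).
have mG n : measurable (G n).
  apply: measurableI; first exact: measurable_box.
  by apply: measurableD; [exact: bigcupT_measurable | exact: bigsetU_measurable].
have cvgG : (mu \o G) @ \oo --> mu (\bigcap_n G n).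
  apply: nonincreasing_cvg_mu => //.
  - apply: le_lt_trans (measure_box_lty mu_leb (tconst d (- r)) (tconst d r)).
    by apply: le_measure; rewrite ?inE //; [exact: measurable_box | move=> x []].
  - exact: bigcapT_measurable.
  - move=> m n mn; apply/subsetPset => x [Kx [Bx nBx]]; split => //; split => //.
    move=> Bmx; apply: nBx; move: Bmx; rewrite !BnE => -[k /= km Fk].
    by exists k => //=; exact: leq_trans km mn.
have capG0 : \bigcap_n G n = set0.
  apply/seteqP; split => x // Gx.
  have [_ [[k _ Fk] _]] := Gx 0%N I; have [_ [_]] := Gx k.+1 I.
  by rewrite BnE; apply; exists k => /=.
rewrite capG0 measure0 in cvgG.
have [N _ GN] := cvgG _ (@nbhs_open_ereal_lt R 0 (fun=> e) e_gt0).
by exists N; apply/ltW; apply: (GN N) => /=.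
Qed.

Lemma approximable_bigcup (F : (set T)^nat) :
  (forall k, approximable (F k)) -> approximable (\bigcup_k F k).
Proof.
move=> aF; have mF k : measurable (F k) by case: (aF k).
split => [|e e_gt0]; first exact: bigcupT_measurable.
have e2_gt0 : 0 < e / 2 by lra.
have [N tail_small] := measure_cube_bigcup_tail mF e2_gt0.
have [U eU hU] := (approximable_bigsetU N aF).2 _ e2_gt0.
have mBN : measurable (\big[setU/set0]_(k < N) F k) by exact: bigsetU_measurable.
exists U => //; rewrite (splitr e).
apply: (le_measure_cover2 _ _ (measurable_cube_setY mBN (measurable_elementary eU))
  _ tail_small hU).
- apply: measurable_cube_setY (measurable_elementary eU).
  exact: bigcupT_measurable.
- apply: measurableI; first exact: measurable_box.
  by apply: measurableD => //; exact: bigcupT_measurable.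
- move=> x [Kx]; rewrite /setY /= => -[[Bx nUx]|[Ux nBx]].
    have [BNx|nBNx] := pselect ((\big[setU/set0]_(k < N) F k) x).
      by right; split => //; left.
    by left.
  right; split => //; right; split => // BNx; apply: nBx.
  exact: bigsetU_bigcup BNx.
Qed.

Lemma sigma_algebra_approximable : sigma_algebra setT approximable.
Proof.
split.
- by apply: approximable_self; constructor.
- move=> B [mB aB]; rewrite setTD; split; first exact: measurableC.
  move=> e e_gt0; have [U eU hU] := aB e e_gt0.
  by exists (~` U); [constructor | rewrite setYCC].
- exact: approximable_bigcup.
Qed.

Lemma measurable_elementary_approx B : measurable B -> elementary_approx B.
Proof.
suff /[apply] [[]] : (measurable : set (set T)) `<=` approximable by [].
rewrite measurable_boxesE; apply: smallest_sub; first exact: sigma_algebra_approximable.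
by move=> _ [a [b ->]]; apply: approximable_self; exact: elementary_box.
Qed.

End Approximation.

Section TranslationContinuity.
Variables (R : realType) (d : nat).
Local Notation T := (d.-tuple R).
Variable mu : {measure set T -> \bar R}.
Hypothesis mu_leb : is_lebesgue mu.
Local Open Scope measure_scope.

(* With [U] elementary and close to [B], [B \ (B + b)] is covered by
   [B + U], its translate by [b], and [U + (U + b)]. *)
Lemma measure_setD_translate_small (r : R) (B : set T) : 0 < r ->
  B `<=` cube r -> measurable B -> forall e : R, 0 < e ->
  exists2 del : R, 0 < del & forall b : T,
    (forall i, `|tnth b i| < del) -> (mu (B `\` translate B b) <= e%:E)%E.
Proof.
move=> r_gt0 BK mB e e_gt0; have r1_gt0 : 0 < r + 1 by lra.
have e3_gt0 : 0 < e / 3 by lra.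
have [U eU BU] := measurable_elementary_approx mu_leb (r + 1) mB e3_gt0.
have [del del_gt0 Ucont] := translation_continuous_elementary mu_leb r1_gt0 eU e3_gt0.
exists (Num.min del 1) => [|b small_b]; first by rewrite lt_min del_gt0 ltr01.
have [small_b1 small_b2] : (forall i, `|tnth b i| < del) /\ (forall i, `|tnth b i| < 1).
  by split=> i; move: (small_b i); rewrite lt_min => /andP[].
have mU := measurable_elementary eU.
set S1 := cube (r + 1) `&` (B `+` U).
set S3 := cube (r + 1) `&` (U `+` translate U b).
have mS1 : measurable S1 by apply: measurable_cube_setY.
have mS3 : measurable S3 by apply: measurable_cube_setY => //; exact: measurable_translate.
have mtS1 : measurable (translate S1 b) by exact: measurable_translate.
have -> : e = e / 3 + e / 3 + e / 3 by field.
have mX : measurable (B `\` translate B b).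
  by apply: measurableD => //; exact: measurable_translate.
have mS1U := measurableU _ _ mS1 mtS1.
apply: (le_measure_cover2 mX mS1U mS3); last exact: Ucont small_b1.
- move=> x [Bx nBxb].
  have Kx : cube (r + 1) x by move=> i; move: (BK x Bx i); rewrite !tnth_mktuple; lra.
  have [Ux|nUx] := pselect (U x); last by left; left; split => //; left.
  have [Uxb|nUxb] := pselect (U (tsub x b)); last by right; split => //; left.
  left; right; split; last by right.
  move=> i; move: (BK x Bx i) (small_b2 i); rewrite !tnth_mktuple => /andP[? ?].
  by rewrite ltr_norml => /andP[? ?]; apply/andP; split; lra.
- apply: (le_measure_cover2 mS1U mS1 mtS1 (@subset_refl _ _) BU).
  by rewrite (measure_translate mu_leb b mS1).
Qed.

(* A Caratheodory set [A] sits inside a measurable [B] with [mu^* (B \ A)] small,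
   and [A \ (A + b)] is covered by [B \ (B + b)] and [(B \ A) + b]. *)
Lemma outer_measure_setD_translate_small (r : R) (A : set T) : 0 < r ->
  A `<=` cube r -> mu^*.-caratheodory A -> forall e : R, 0 < e ->
  exists2 del : R, 0 < del & forall b : T,
    (forall i, `|tnth b i| < del) -> (mu^* (A `\` translate A b) <= e%:E)%E.
Proof.
move=> r_gt0 AK cA e e_gt0; have e2_gt0 : 0 < e / 2 by lra.
have mK : measurable (cube r : set T) by exact: measurable_box.
have A_fin : mu^* A \is a fin_num.
  rewrite ge0_fin_numE; last exact: mu_ext_ge0.
  apply: le_lt_trans (le_mu_ext mu AK) _.
  by rewrite measurable_mu_extE //; exact: measure_box_lty.
have [_ [F [mF AF] <-] muF] := lb_ereal_inf_adherent e2_gt0 A_fin.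
set B := cube r `&` \bigcup_k F k.
have mB : measurable B by apply: measurableI => //; exact: bigcupT_measurable.
have AB : A `<=` B by move=> y Ay; split; [exact: AK | exact: AF].
have BA_small : (mu^* (B `&` ~` A) <= (e / 2)%:E)%E.
  have := cA B; rewrite (setIidr AB) measurable_mu_extE // => muB.
  rewrite -(leeD2lE _ _ A_fin) -muB; apply: (le_trans _ (ltW muF)).
  by apply: measure_sigma_subadditive => //; exact: subIsetr.
have [del del_gt0 Bcont] := measure_setD_translate_small r_gt0 (@subIsetl _ _ _) mB e2_gt0.
exists del => // b small_b; rewrite (splitr e) EFinD.
apply: (@le_trans _ _ (mu^* ((B `\` translate B b) `|` translate (B `&` ~` A) b))).
  apply: le_mu_ext => y [Ay nAyb]; have [Byb|nByb] := pselect (B (tsub y b)).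
    by right.
  by left; split => //; exact: AB.
apply: le_trans (outer_measureU2 _ _ _) _.
apply: leeD; last by rewrite -(outer_measure_translate mu_leb _ b) in BA_small.
have mBb : measurable (B `\` translate B b).
  by apply: measurableD => //; exact: measurable_translate.
by move: (Bcont _ small_b); rewrite -measurable_mu_extE.
Qed.

End TranslationContinuity.

Section Scaling.
Variables (R : realType) (d : nat).
Local Notation T := (d.-tuple R).

Lemma tscaleD (s t : R) (a : T) : tscale (s + t) a = tadd (tscale s a) (tscale t a).
Proof. by apply: eq_from_tnth => i; rewrite !tnth_mktuple mulrDl. Qed.

Lemma tscale1 (a : T) : tscale 1 a = a.
Proof. by apply: eq_from_tnth => i; rewrite tnth_mktuple mul1r. Qed.

Lemma tscale_small (a : T) (del : R) : 0 < del ->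
  exists2 eta : R, 0 < eta & forall t, `|t| < eta -> forall i, `|tnth (tscale t a) i| < del.
Proof.
move=> del_gt0; pose S := \sum_(i < d) `|tnth a i|.
have S_ge0 : 0 <= S by apply: sumr_ge0.
exists (del / (S + 1)) => [|t t_small i]; first by apply: divr_gt0; lra.
have ai_le : `|tnth a i| <= S by rewrite /S (bigD1 i) //= lerDl sumr_ge0.
rewrite tnth_mktuple normrM; rewrite ltr_pdivlMr in t_small; last lra.
by apply: le_lt_trans t_small; apply: ler_wpM2l => //; lra.
Qed.

End Scaling.

Section Lambda.
Variables (R : realType) (d : nat).
Local Notation T := (d.-tuple R).
Variable mu : {measure set T -> \bar R}.
Hypothesis mu_leb : is_lebesgue mu.
Variable M : set T.
Hypothesis M_periodic : torus_set M.
Hypothesis M_leb : leb_measurable mu M.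
Local Notation D := (@fund_dom R d).
Local Open Scope measure_scope.

Lemma torus_set_setD_translate c : torus_set (M `\` translate M c).
Proof.
have shift x y : (forall i, exists k : int, tnth x i - tnth y i = 2 * pi * k%:~R) ->
    forall i, exists k : int, tnth (tsub x c) i - tnth (tsub y c) i = 2 * pi * k%:~R.
  by move=> xy i; have [k xyk] := xy i; exists k; rewrite !tnth_tsub -xyk; ring.
move=> x y xy; have Mxy := M_periodic xy; have Mxyc := M_periodic (shift _ _ xy).
by split=> -[Mx nMx]; split; [exact/Mxy | move=> /Mxyc/nMx | exact/Mxy | move=> /Mxyc/nMx].
Qed.

(* [M \ (M + (b + c))] is covered by [M \ (M + b)] and [(M \ (M + c)) + b]. *)
Lemma Lambda_tadd_le b c : (Lambda mu M (tadd b c) <= Lambda mu M b + Lambda mu M c)%E.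
Proof.
apply: (@le_trans _ _ (mu^* ((D `&` (M `\` translate M b)) `|`
    (D `&` translate (M `\` translate M c) b)))).
  apply: le_mu_ext => x [Dx [Mx nMx]]; have [Mxb|nMxb] := pselect (M (tsub x b)).
    right; split => //; split => // Mxbc; apply: nMx; move: Mxbc; congr M.
    by apply: eq_from_tnth => i; rewrite !tnth_mktuple; ring.
  by left.
apply: le_trans (outer_measureU2 _ _ _) _; apply: leeD => //.
by rewrite -[X in (_ <= X)%E](outer_measure_fund_dom_translate mu_leb
  (torus_set_setD_translate c) b).
Qed.

Lemma Lambda_fin_num b : Lambda mu M b \is a fin_num.
Proof.
rewrite ge0_fin_numE; last exact: mu_ext_ge0.
apply: (@le_lt_trans _ _ (mu^* (box (tconst d 0) (tconst d (2 * pi))))).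
  by apply: le_mu_ext => x [Dx _] i; rewrite !tnth_mktuple; exact: Dx.
by rewrite measurable_mu_extE; [exact: measure_box_lty | exact: measurable_box].
Qed.

(* [M] is replaced by its part in a cube containing the fundamental domain. *)
Lemma Lambda_small e : 0 < e -> exists2 del : R, 0 < del &
  forall b : T, (forall i, `|tnth b i| < del) -> (Lambda mu M b <= e%:E)%E.
Proof.
move=> e_gt0; have r_gt0 : 0 < 2 * pi + 1 :> R by have := pi_gt0 R; lra.
set A := M `&` cube (2 * pi + 1).
have cA : mu^*.-caratheodory A.
  apply: caratheodory_measurable_setI => //.
  by apply: caratheodory_measurable_mu_ext; exact: measurable_box.
have [del del_gt0 Acont] :=
  outer_measure_setD_translate_small mu_leb r_gt0 (@subIsetr _ _ _) cA e_gt0.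
exists del => // b /Acont; apply: le_trans; apply: le_mu_ext => x [Dx [Mx nMx]].
split; last by case.
by split => // i; move: (Dx i); rewrite !tnth_mktuple; lra.
Qed.

End Lambda.

(* With [n = floor (1/l)], [f 1 <= n f l + f (1 - n l) <= n f l + f 1 / 2],
   hence [f l >= f 1 / (2 n) >= f 1 * l / 2]. *)
Lemma subadditive_linear_lower_bound (R : archiRealFieldType) (f : R -> R) :
  (forall t, 0 <= f t) -> (forall s t, f (s + t) <= f s + f t) ->
  (forall e, 0 < e -> exists2 del, 0 < del & forall t, `|t| < del -> f t <= e) ->
  0 < f 1 ->
  exists c eps : R, 0 < c /\ 0 < eps /\ forall l, 0 < l -> l < eps -> c * l <= f l.
Proof.
move=> f_ge0 f_subadd f_small f1_gt0.
have f0_le0 : f 0 <= 0.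
  rewrite leNgt; apply/negP => f0_gt0; have f02_gt0 : 0 < f 0 / 2 by lra.
  have [del del_gt0 /(_ 0)] := f_small _ f02_gt0.
  by rewrite normr0 => /(_ del_gt0); lra.
have f_mulrn l (n : nat) : f (n%:R * l) <= n%:R * f l.
  elim: n => [|n IH]; first by rewrite !mul0r.
  rewrite -addn1 natrD !mulrDl !mul1r; apply: le_trans (f_subadd _ _) _.
  by rewrite lerD2r.
have f12_gt0 : 0 < f 1 / 2 by lra.
have [del del_gt0 f_del] := f_small _ f12_gt0.
exists (f 1 / 2), (Num.min del 1); split => //.
split => [|l l_gt0]; first by rewrite lt_min del_gt0 ltr01.
rewrite lt_min => /andP[l_del l_lt1].
have /andP[n_le n_gt] : (Num.truncn l^-1)%:R <= l^-1 < (Num.truncn l^-1).+1%:R.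
  by apply: truncn_itv; rewrite invr_ge0 ltW.
set n := Num.truncn l^-1 in n_le n_gt.
have nl_le1 : n%:R * l <= 1 by rewrite -ler_pdivlMr // div1r.
have nl_gt : 1 < n.+1%:R * l by rewrite -ltr_pdivrMr // div1r.
rewrite -addn1 natrD mulrDl mul1r in nl_gt.
have := f_subadd (n%:R * l) (1 - n%:R * l); rewrite addrC subrK.
have := f_del (1 - n%:R * l); rewrite ger0_norm; last lra.
move=> /(_ ltac:(lra)) f_rest; have := f_mulrn l n; have := f_ge0 l.
nra.
Qed.

Theorem mainTheorem5 (R : realType) (d : nat)
    (mu : {measure set (d.-tuple R) -> \bar R})
    (M : set (d.-tuple R)) (a : d.-tuple R) :
  is_lebesgue mu -> torus_set M -> leb_measurable mu M ->
  (0 < Lambda mu M a)%E ->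
  exists c eps : R, 0 < c /\ 0 < eps /\
    forall l : R, 0 < l -> l < eps -> ((c * l)%:E <= Lambda mu M (tscale l a))%E.
Proof.
move=> mu_leb M_periodic M_leb Lambda_a_gt0.
pose f t := fine (Lambda mu M (tscale t a)).
have fE t : Lambda mu M (tscale t a) = (f t)%:E by rewrite fineK ?Lambda_fin_num.
have [||||c [eps [c_gt0 [eps_gt0 f_ge]]]] := @subadditive_linear_lower_bound _ f.
- by move=> t; rewrite -lee_fin -fE; exact: mu_ext_ge0.
- by move=> s t; rewrite -lee_fin EFinD -!fE tscaleD; exact: Lambda_tadd_le.
- move=> e e_gt0; have [del del_gt0 Lsmall] := Lambda_small mu_leb M_leb e_gt0.
  have [eta eta_gt0 small_ta] := tscale_small a del_gt0.
  by exists eta => // t /small_ta /Lsmall; rewrite fE lee_fin.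
- by rewrite -lte_fin -fE tscale1.
by exists c, eps; do 2 split => //; move=> l l_gt0 l_lt; rewrite fE lee_fin f_ge.
Qed.
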